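(* For any two positive integers $l$ and $s$ with $l \geq 2$, there exists a hypergraph $\mathcal{F}$ (with $s < |e|$ for every hyperedge $e$ of $\mathcal{F}$) such that $$\chi\left({\rm KG}^2(\mathcal{F}, s)\right) = l \quad \text{and} \quad {\rm ecd}^2(\mathcal{F}, s) = l + s.$$
   Context: A hypergraph $\mathcal{F}$ consists of a finite vertex set $V(\mathcal{F})$ and a set $E(\mathcal{F}) \subseteq 2^{V(\mathcal{F})} \setminus \{\varnothing\}$ of hyperedges. For an integer $r \geq 2$ and a nonnegative integer $s$ with $s < |e|$ for every hyperedge $e$ of $\mathcal{F}$, the generalized Kneser hypergraph ${\rm KG}^r(\mathcal{F}, s)$ is the $r$-uniform hypergraph whose vertex set is $E(\mathcal{F})$, in which $r$ distinct hyperedges $e_1, \dots, e_r$ of $\mathcal{F}$ form a hyperedge whenever $|e_i \cap e_j| \leq s$ for all distinct $i, j \in \{1, \dots, r\}$. Its chromatic number $\chi$ is the minimum size of a set $C$ admitting a map $f : E(\mathcal{F}) \to C$ such that no hyperedge of ${\rm KG}^r(\mathcal{F}, s)$ is monochromatic (for $r = 2$ this is the ordinary chromatic number of the graph). For sets $A, B$ and a nonnegative integer $s$, write $A \subseteq_s B$ if $|A \setminus B| \leq s$. The $s$-th equitable $r$-colorability defect ${\rm ecd}^r(\mathcal{F}, s)$ is the minimum cardinality of a set $X_0 \subseteq V(\mathcal{F})$ for which there is a partition $\{X_1, \dots, X_r\}$ of $V(\mathcal{F}) \setminus X_0$ (parts may be empty) such that $\big||X_i| - |X_j|\big| \leq 1$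 for all $1 \leq i < j \leq r$, and $e \not\subseteq_s X_i$ for every hyperedge $e \in E(\mathcal{F})$ and every $i \in \{1, \dots, r\}$. *)

From mathcomp Require Import all_boot.
Set Implicit Arguments. Unset Strict Implicit. Unset Printing Implicit Defensive.

(* A hypergraph on a finite vertex type V: a set E of nonempty hyperedges.
   (The vertex set V(F) is the whole finite type V.) *)
Definition hypergraph (V : finType) (E : {set {set V}}) : Prop :=
  set0 \notin E.

Definition edges_larger (V : finType) (E : {set {set V}}) (s : nat) : Prop :=
  forall e, e \in E -> s < #|e|.

Definition KG2_proper_coloring (V : finType) (E : {set {set V}}) (s k : nat)
  (f : {set V} -> 'I_k) : Prop :=
  forall e1 e2, e1 \in E -> e2 \in E -> e1 != e2 ->
    #|e1 :&: e2| <= s -> f e1 != f e2.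

Definition KG2_colorable (V : finType) (E : {set {set V}}) (s k : nat) : Prop :=
  exists f : {set V} -> 'I_k, KG2_proper_coloring E s f.

Definition chi_KG2_eq (V : finType) (E : {set {set V}}) (s k : nat) : Prop :=
  KG2_colorable E s k /\ forall k', KG2_colorable E s k' -> k <= k'.

Definition subset_s (V : finType) (s : nat) (A B : {set V}) : bool :=
  #|A :\: B| <= s.

(* X0 is admissible for ecd^2(F,s): there is a partition {X1,X2} of V \ X0
   (parts may be empty) with ||X1|-|X2|| <= 1 and no e \subseteq_s Xi. *)
Definition ecd2_admissible (V : finType) (E : {set {set V}}) (s : nat)
  (X0 : {set V}) : Prop :=
  exists X1 X2 : {set V},
    [/\ [disjoint X1 & X2], X1 :|: X2 = ~: X0,
        #|X1| <= #|X2|.+1 /\ #|X2| <= #|X1|.+1 &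
        forall e, e \in E -> ~~ subset_s s e X1 /\ ~~ subset_s s e X2].

Definition ecd2_eq (V : finType) (E : {set {set V}}) (s m : nat) : Prop :=
  (exists X0, ecd2_admissible E s X0 /\ #|X0| = m) /\
  forall X0, ecd2_admissible E s X0 -> m <= #|X0|.

From mathcomp Require Import all_boot.
Set Implicit Arguments. Unset Strict Implicit. Unset Printing Implicit Defensive.

(* Take a sunflower: a core C of s vertices and l petals C ∪ {x_j}.  Two
   distinct petals meet exactly in C, so KG^2(F, s) is the complete graph K_l
   and its chromatic number is l.  Every vertex lies in a petal of size s + 1,
   so any nonempty X contains a vertex x of some petal e with |e \ X| <= s;
   hence both parts X1, X2 must be empty, X0 is the whole vertex set of size
   s + l, and it is admissible because every petal has more than s vertices.
   The argument works for every s and every l >= 1. *)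

Section KneserClique.
Variables (V : finType) (E : {set {set V}}) (s : nat).

Lemma chi_KG2_clique e0 : e0 \in E ->
  {in E &, forall e1 e2, e1 != e2 -> #|e1 :&: e2| <= s} ->
  chi_KG2_eq E s #|E|.
Proof.
move=> e0E meet_small; split.
  exists (enum_rank_in e0E) => e1 e2 e1E e2E ne _.
  by apply: contra ne => /eqP /(enum_rank_in_inj e1E e2E) ->.
move=> k [f f_proper].
have f_inj : {in E &, injective f}.
  move=> e1 e2 e1E e2E /eqP; apply: contraTeq => ne.
  exact: f_proper e1E e2E ne (meet_small _ _ e1E e2E ne).
by rewrite -(card_in_imset f_inj) (leq_trans (max_card _)) ?card_ord.
Qed.

End KneserClique.

Section ColorabilityDefect.
Variables (V : finType) (E : {set {set V}}) (s : nat).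

Lemma subset_s_small_edge (e X : {set V}) x :
  #|e| <= s.+1 -> x \in e -> x \in X -> subset_s s e X.
Proof.
move=> e_small xe xX; rewrite /subset_s.
have e_minus_x : #|e :\ x| <= s by move: e_small; rewrite (cardsD1 x) xe.
apply: leq_trans e_minus_x; apply: subset_leq_card; apply/subsetP => y.
by rewrite !inE => /andP[yX ->]; rewrite andbT; apply: contraNneq yX => ->.
Qed.

Hypothesis edges_cover : forall x, exists2 e, e \in E & x \in e.
Hypothesis edges_uniform : {in E, forall e : {set V}, #|e| = s.+1}.

Lemma not_subset_s_eq0 (X : {set V}) :
  (forall e, e \in E -> ~~ subset_s s e X) -> X = set0.
Proof.
move=> X_avoids; apply/setP => x; rewrite inE; apply/negP => xX.
have [e eE xe] := edges_cover x.
have e_small : #|e| <= s.+1 by rewrite edges_uniform.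
by move: (X_avoids e eE); rewrite (subset_s_small_edge e_small xe xX).
Qed.

Lemma ecd2_eq_card : ecd2_eq E s #|V|.
Proof.
split.
  exists setT; split; last by rewrite cardsT.
  exists set0, set0; split.
  - by rewrite -setI_eq0 setI0.
  - by rewrite setU0 setCT.
  - by rewrite cards0.
  - by move=> e eE; rewrite /subset_s setD0 edges_uniform ?ltnn.
move=> X0 [X1 [X2 [_ X12_compl _ X12_avoid]]].
have X1_eq0 : X1 = set0 by apply: not_subset_s_eq0 => e /X12_avoid [].
have X2_eq0 : X2 = set0 by apply: not_subset_s_eq0 => e /X12_avoid [].
by rewrite -[X0]setCK -X12_compl X1_eq0 X2_eq0 setU0 setC0 cardsT.
Qed.

End ColorabilityDefect.

Section Sunflower.
Variables s l : nat.

Definition core : {set 'I_s + 'I_l} := inl @: setT.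
Definition petal (j : 'I_l) : {set 'I_s + 'I_l} := inr j |: core.
Definition sunflower : {set {set 'I_s + 'I_l}} := petal @: setT.

Lemma inr_notin_core j : inr j \notin core.
Proof. by apply/imsetP => -[]. Qed.

Lemma card_core : #|core| = s.
Proof. by rewrite card_imset ?cardsT ?card_ord //; apply: inl_inj. Qed.

Lemma card_petal j : #|petal j| = s.+1.
Proof. by rewrite cardsU1 inr_notin_core card_core. Qed.

Lemma petal_inj : injective petal.
Proof.
move=> j1 j2 eq_petal.
have : inr j1 \in petal j2 by rewrite -eq_petal setU11.
by rewrite in_setU1 (negbTE (inr_notin_core _)) orbF => /eqP [].
Qed.

Lemma card_sunflower : #|sunflower| = l.
Proof. by rewrite card_imset ?cardsT ?card_ord //; apply: petal_inj. Qed.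

Lemma petalI j1 j2 : j1 != j2 -> petal j1 :&: petal j2 = core.
Proof.
move=> ne; rewrite -setUIl; apply/setUidPr; apply/subsetP => x.
by rewrite !inE => /andP[/eqP -> /eqP [] eq_j]; rewrite eq_j eqxx in ne.
Qed.

Lemma petal_cover (j0 : 'I_l) x : exists2 e, e \in sunflower & x \in e.
Proof.
case: x => [i | j].
  by exists (petal j0); rewrite ?imset_f // setU1r ?imset_f.
by exists (petal j); rewrite ?imset_f ?setU11.
Qed.

End Sunflower.

Theorem theorem2 (l s : nat) (hl : 2 <= l) (hs : 0 < s) :
  exists (V : finType) (E : {set {set V}}),
    [/\ hypergraph E, edges_larger E s,
        chi_KG2_eq E s l & ecd2_eq E s (l + s)].
Proof.
have j0 : 'I_l := Ordinal (leq_trans (ltnSn 1) hl).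
have petal_in j : petal s j \in sunflower s l by rewrite imset_f.
have sunflower_uniform : {in sunflower s l, forall e : {set _}, #|e| = s.+1}.
  by move=> _ /imsetP[j _ ->]; rewrite card_petal.
exists (('I_s + 'I_l)%type : finType), (sunflower s l); split.
- by apply/negP => /sunflower_uniform; rewrite cards0.
- by move=> e /sunflower_uniform ->.
- rewrite -[X in chi_KG2_eq _ _ X](card_sunflower s l).
  apply: (chi_KG2_clique (petal_in j0)).
  move=> _ _ /imsetP[j1 _ ->] /imsetP[j2 _ ->] ne.
  by rewrite petalI ?card_core //; apply: contra ne => /eqP ->.
- have := ecd2_eq_card (petal_cover j0) sunflower_uniform.
  by rewrite card_sum !card_ord addnC.
Qed.
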